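(* Let $N, J \ge 1$ be integers and let $F_1,\dots,F_J:\mathbb{R}_+^N\to\mathbb{R}_+$ be upper semicontinuous functions that are homogeneous of degree 1 (i.e. $F_j(\lambda x)=\lambda F_j(x)$ for all $\lambda\ge 0$, $x\in\mathbb{R}_+^N$). Define $F:\mathbb{R}_+^N\to\mathbb{R}_+$ by $$F(x)=\max\Big\{\sum_{j=1}^J F_j(x_j): x_j\in\mathbb{R}_+^N \text{ for all } j,\ \sum_{j=1}^J x_j=x\Big\}.$$ Let $w\in\mathbb{R}^N$ and suppose $x^*\in\arg\max_{x\ge 0}\,(F(x)-w\cdot x)$. Let $x_1^*,\dots,x_J^*\in\mathbb{R}_+^N$ be any vectors with $x^*=\sum_{j=1}^J x_j^*$ and $x_j^*\in\arg\max_{x\ge 0}\,(F_j(x)-w\cdot x)$ for every $j$. Let $C$ be the smallest convex cone containing $\{x_1^*,\dots,x_J^*\}$. Then $F(x)=w\cdot x$ for all $x\in C$.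
   Context: A production function is an upper semicontinuous function $\mathbb{R}_+^N\to\mathbb{R}_+$. The function $F$ defined in the claim (the maximum is attained) is called the aggregate production function of $F_1,\dots,F_J$. A set $C$ is a cone if $y\in C$, $\alpha\ge0$ imply $\alpha y\in C$; the smallest convex cone containing a finite set $\{y_j\}$ is $\{\sum_j\alpha_j y_j:\alpha_j\ge 0\}$. $x\ge 0$ means $x\in\mathbb{R}_+^N$. *)

From HB Require Import structures.
From mathcomp Require Import all_boot all_order all_algebra.
From mathcomp Require Import reals.
Set Implicit Arguments. Unset Strict Implicit. Unset Printing Implicit Defensive.
Import Order.TTheory GRing.Theory Num.Theory.
Local Open Scope ring_scope.

Section Defs.
Variables (R : realType) (N : nat).

Definition nonneg (x : 'rV[R]_N) : Prop := forall i, 0 <= x ord0 i.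

Definition dotp (w x : 'rV[R]_N) : R := \sum_(i < N) w ord0 i * x ord0 i.

(* f : R_+^N -> R_+ (values outside the orthant are irrelevant) *)
Definition maps_to_nonneg (f : 'rV[R]_N -> R) : Prop :=
  forall x, nonneg x -> 0 <= f x.

Definition usc_on_orthant (f : 'rV[R]_N -> R) : Prop :=
  forall x, nonneg x -> forall t, f x < t ->
    exists2 d, 0 < d & forall y, nonneg y ->
      (forall i, `|y ord0 i - x ord0 i| < d) -> f y < t.

Definition homog1 (f : 'rV[R]_N -> R) : Prop :=
  forall (l : R) x, 0 <= l -> nonneg x -> f (l *: x) = l * f x.

Definition argmax_profit (f : 'rV[R]_N -> R) (w xs : 'rV[R]_N) : Prop :=
  nonneg xs /\ forall x, nonneg x -> f x - dotp w x <= f xs - dotp w xs.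

Definition is_aggregate (J : nat) (Fs : 'I_J -> 'rV[R]_N -> R)
    (F : 'rV[R]_N -> R) : Prop :=
  forall x, nonneg x ->
    (exists xs : 'I_J -> 'rV[R]_N,
        [/\ forall j, nonneg (xs j), \sum_(j < J) xs j = x
          & F x = \sum_(j < J) Fs j (xs j)]) /\
    (forall xs : 'I_J -> 'rV[R]_N,
        (forall j, nonneg (xs j)) -> \sum_(j < J) xs j = x ->
        \sum_(j < J) Fs j (xs j) <= F x).

Definition cone_gen (J : nat) (ys : 'I_J -> 'rV[R]_N) (x : 'rV[R]_N) : Prop :=
  exists a : 'I_J -> R, (forall j, 0 <= a j) /\ x = \sum_(j < J) a j *: ys j.

End Defs.

(* A degree-1 homogeneous F_j has a profit F_j x - w.x that scales linearly
   along rays, so comparing a maximiser x_j^* with 0 and with 2 x_j^* shows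
   that the maximal profit is 0, whence F_j <= w.x on the whole orthant.
   Summing over any decomposition gives F <= w.x.  Conversely a point of the
   cone, x = sum a_j x_j^*, is decomposed as the a_j x_j^* , so
   F x >= sum a_j F_j(x_j^* ) = sum a_j w.x_j^* = w.x. *)
From HB Require Import structures.
From mathcomp Require Import all_boot all_order all_algebra.
From mathcomp Require Import reals lra.
Import Order.TTheory GRing.Theory Num.Theory.
Local Open Scope ring_scope.

Section Orthant.
Set Implicit Arguments. Unset Strict Implicit.
Variables (R : realType) (N : nat).
Implicit Types (w x y : 'rV[R]_N) (f : 'rV[R]_N -> R).

Lemma dotpD w x y : dotp w (x + y) = dotp w x + dotp w y.
Proof. by rewrite /dotp -big_split; apply: eq_bigr => i _; rewrite mxE mulrDr. Qed.

Lemma dotp0 w : dotp w 0 = 0.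
Proof. by rewrite /dotp big1 // => i _; rewrite mxE mulr0. Qed.

Lemma dotpZ w a x : dotp w (a *: x) = a * dotp w x.
Proof. by rewrite /dotp mulr_sumr; apply: eq_bigr => i _; rewrite mxE mulrCA. Qed.

Lemma dotp_sum (J : nat) w (ys : 'I_J -> 'rV[R]_N) :
  dotp w (\sum_(j < J) ys j) = \sum_(j < J) dotp w (ys j).
Proof. exact: (big_morph _ (dotpD w) (dotp0 w)). Qed.

Lemma nonneg0 : nonneg (0 : 'rV[R]_N).
Proof. by move=> i; rewrite mxE. Qed.

Lemma nonnegZ a x : 0 <= a -> nonneg x -> nonneg (a *: x).
Proof. by move=> a_ge0 x_ge0 i; rewrite mxE mulr_ge0. Qed.

Lemma nonneg_sum (J : nat) (ys : 'I_J -> 'rV[R]_N) :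
  (forall j, nonneg (ys j)) -> nonneg (\sum_(j < J) ys j).
Proof.
move=> ys_ge0; apply: (big_ind (@nonneg R N)) => // [|y z y_ge0 z_ge0 i].
- exact: nonneg0.
- by rewrite mxE addr_ge0.
Qed.

Lemma homog1_0 f : homog1 f -> f 0 = 0.
Proof. by move=> f_homog; rewrite -(scale0r 0) f_homog ?mul0r //; apply: nonneg0. Qed.

Section HomogeneousProfit.
Variables (f : 'rV[R]_N -> R) (w y : 'rV[R]_N).
Hypotheses (f_homog : homog1 f) (y_opt : argmax_profit f w y).

Lemma homog1_argmax_profit_eq : f y = dotp w y.
Proof.
have [y_ge0 y_max] := y_opt.
have := y_max 0 nonneg0; rewrite homog1_0 // dotp0 subr0 => profit_ge0.
have := y_max (2 *: y) (nonnegZ (ler0n R 2) y_ge0).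
rewrite f_homog ?ler0n // dotpZ => profit_le_twice.
lra.
Qed.

Lemma homog1_argmax_profit_le x : nonneg x -> f x <= dotp w x.
Proof.
move=> x_ge0; have [_ y_max] := y_opt.
by have := y_max x x_ge0; rewrite homog1_argmax_profit_eq subrr subr_le0.
Qed.

End HomogeneousProfit.

Section Aggregate.
Variables (J : nat) (Fs : 'I_J -> 'rV[R]_N -> R) (F : 'rV[R]_N -> R).
Hypothesis F_agg : is_aggregate Fs F.

Lemma aggregate_le_dotp w :
  (forall j x, nonneg x -> Fs j x <= dotp w x) ->
  forall x, nonneg x -> F x <= dotp w x.
Proof.
move=> Fs_le x x_ge0; have [[ys [ys_ge0 <- ->]] _] := F_agg x_ge0.
by rewrite dotp_sum; apply: ler_sum => j _; apply: Fs_le.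
Qed.

Lemma aggregate_ge_sum (ys : 'I_J -> 'rV[R]_N) :
  (forall j, nonneg (ys j)) ->
  \sum_(j < J) Fs j (ys j) <= F (\sum_(j < J) ys j).
Proof. by move=> ys_ge0; have [_] := F_agg (nonneg_sum ys_ge0); apply. Qed.

End Aggregate.

End Orthant.

Theorem theorem1 (R : realType) (N J : nat) (hN : (0 < N)%N) (hJ : (0 < J)%N)
  (Fs : 'I_J -> 'rV[R]_N -> R)
  (hFs_nonneg : forall j, maps_to_nonneg (Fs j))
  (hFs_usc : forall j, usc_on_orthant (Fs j))
  (hFs_homog : forall j, homog1 (Fs j))
  (F : 'rV[R]_N -> R) (hF : is_aggregate Fs F)
  (w xstar : 'rV[R]_N) (hxstar : argmax_profit F w xstar)
  (xs : 'I_J -> 'rV[R]_N)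
  (hxs_nonneg : forall j, nonneg (xs j))
  (hxs_sum : xstar = \sum_(j < J) xs j)
  (hxs_opt : forall j, argmax_profit (Fs j) w (xs j)) :
  forall x, cone_gen xs x -> F x = dotp w x.
Proof.
move=> _ [a [a_ge0 ->]].
have axs_ge0 j : nonneg (a j *: xs j) by apply: nonnegZ.
apply/le_anti/andP; split.
- apply: (aggregate_le_dotp hF) (nonneg_sum axs_ge0) => j.
  exact: homog1_argmax_profit_le (hFs_homog j) (hxs_opt j).
- apply: le_trans (aggregate_ge_sum hF axs_ge0).
  rewrite dotp_sum; apply: ler_sum => j _.
  by rewrite dotpZ hFs_homog // (homog1_argmax_profit_eq (hFs_homog j) (hxs_opt j)).
Qed.
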